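(* Let $X$ be a real topological vector space and let $C\subseteq X$ be convex. Then $\operatorname{fri} C$ is a convex subset of $C$.
   Context: For a convex set $C$ in a real vector space, a convex subset $F\subseteq C$ is a face of $C$ if for every $x\in F$ and all $y,z\in C$ with $x\in(y,z)$ we have $y,z\in F$, where $(y,z)=\{(1-t)y+tz: t\in(0,1)\}$ is the open segment. For $x\in C$, $F_{\min}(x,C)$ denotes the minimal face of $C$ containing $x$ (the intersection of all faces of $C$ containing $x$). The face relative interior is $\operatorname{fri} C=\{x\in C: C\subseteq \overline{F_{\min}(x,C)}\}$, where the bar denotes topological closure in $X$. *)

From HB Require Import structures.
From mathcomp Require Import all_boot all_order all_algebra.
From mathcomp Require Import all_classical all_reals all_analysis.
Set Implicit Arguments. Unset Strict Implicit. Unset Printing Implicit Defensive.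
Import Order.TTheory GRing.Theory Num.Theory.
Local Open Scope classical_set_scope.
Local Open Scope ring_scope.

Definition open_segment (R : realType) (X : lmodType R) (y z : X) : set X :=
  [set x | exists t : R, [/\ 0 < t, t < 1 & x = (1 - t) *: y + t *: z]].

Definition is_face (R : realType) (X : lmodType R) (C F : set X) : Prop :=
  [/\ convex_set (F : set (convex_lmodType X)), F `<=` C &
      forall x y z, F x -> C y -> C z -> open_segment y z x -> F y /\ F z].

Definition Fmin (R : realType) (X : lmodType R) (x : X) (C : set X) : set X :=
  [set u | forall F : set X, is_face C F -> F x -> F u].

Definition fri (R : realType) (X : topologicalLmodType R) (C : set X) : set X :=
  [set x | C x /\ C `<=` closure (Fmin x C)].

From HB Require Import structures.
From mathcomp Require Import all_boot all_order all_algebra.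
From mathcomp Require Import all_classical all_reals all_analysis.
Set Implicit Arguments. Unset Strict Implicit. Unset Printing Implicit Defensive.
Import Order.TTheory GRing.Theory Num.Theory.
Local Open Scope classical_set_scope.
Local Open Scope ring_scope.
Local Open Scope convex_scope.

(* The key observation is that minimal faces grow along open segments: if
   x, y lie in C and z lies in the open segment (x, y), then every face of C
   containing z contains x (by the defining property of faces), hence
   F_min(x, C) is contained in F_min(z, C).  Taking closures,
   C ⊆ cl F_min(x, C) ⊆ cl F_min(z, C) whenever x ∈ fri C.

   Convexity of fri C then only needs to be checked for strict convex
   combinations z of x, y ∈ fri C (the endpoints are trivial); such a z lies
   in C by convexity of C, and in (x, y), so z ∈ fri C by the observation. *)

Section MinimalFaceMonotone.
Variables (R : realType) (X : lmodType R).

(* A strict convex combination of y and z lies in the open segment (y, z);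
   the segment is parametrised from y, hence the weight 1 - k. *)
Lemma conv_in_open_segment (y z : convex_lmodType X) (k : {i01 R}) :
  0 < k%:num -> k%:num < 1 -> open_segment y z (y <| k |> z).
Proof.
move=> k0 k1; exists (1 - k%:num); split.
- by rewrite subr_gt0.
- by rewrite ltrBlDr ltrDl.
- by rewrite opprB addrCA subrr addr0.
Qed.

Lemma Fmin_open_segment (C : set X) (x y z : X) :
  C y -> C z -> open_segment y z x -> Fmin y C `<=` Fmin x C.
Proof.
move=> Cy Cz yzx u Fmin_yu F faceF Fx.
have [_ _ face_extreme] := faceF.
have [Fy _] := face_extreme x y z Fx Cy Cz yzx.
exact: Fmin_yu F faceF Fy.
Qed.

End MinimalFaceMonotone.

Theorem proposition2p1 (R : realType) (X : topologicalLmodType R) (C : set X) :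
  convex_set (C : set (convex_lmodType X)) ->
  convex_set (fri C : set (convex_lmodType X)) /\ fri C `<=` C.
Proof.
move=> convC; split; last by move=> x [].
apply/convex_setW => x y /set_mem [Cx C_sub_x] /set_mem [Cy _] k k0 k1.
have Cz : C (x <| k |> y).
  by have := convC x y k (mem_set Cx) (mem_set Cy); rewrite inE.
apply/mem_set; split => //.
apply: subset_trans C_sub_x _; apply: closureS.
apply: Fmin_open_segment Cx Cy _.
exact: conv_in_open_segment k0 k1.
Qed.
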